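(* Let $(X,d)$ be a separable geodesic Gromov-hyperbolic space with basepoint $o$, and $\mu$ a countably supported non-elementary probability measure on $\mathrm{Isom}(X)$ with finite exponential moment. Let $v(\mu)=\sup_{\xi\in\overline X^h}\mathbb E[(\sigma_0(X_1,\xi)-\ell_\mu)^2]$. Then there exists $C>0$ such that for every $\epsilon>0$ there exists $b>0$ such that for every $\lambda$ with $|\lambda|<v(\mu)/b$, every $n\in\mathbb N$ and every $x\in\overline X^h$, $$\mathbb E\big[e^{\lambda(\sigma(L_n,x)-n\ell_\mu)}\big]\le\exp\Big(\frac{\lambda^2(v(\mu)+\epsilon)n}{2}+C|\lambda|\Big).$$
   Context: Gromov-hyperbolic: $\exists\delta\ge0$, $(x|y)_o\ge\min\{(x|z)_o,(z|y)_o\}-\delta$ with $(x|y)_o=\frac12(d(x,o)+d(y,o)-d(x,y))$; non-elementary: the semigroup generated by $\mathrm{supp}\,\mu$ contains two loxodromic isometries with disjoint fixed point pairs on the Gromov boundary; $\kappa(g)=d(g\cdot o,o)$, finite exponential moment: $\int e^{\alpha\kappa}d\mu<\infty$ for some $\alpha>0$. $\overline X^h$ is the horofunction compactification (closure of $\{h_x:m\mapsto d(x,m)-d(x,o)\}$ among 1-Lipschitz functions vanishing at $o$, pointwise convergence), action $(g\cdot h)(m)=h(g^{-1}m)-h(g^{-1}o)$, Busemann cocycle $\sigma(g,h)=h(g^{-1}o)$. $X_i$ i.i.d. with law $\mu$, $L_n=X_n\cdots X_1$, $\ell_\mu=\lim\kappa(L_n)/n$ a.s. $\sigma_0(g,x):=\sigma(g,x)+\psi(g\cdot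 x)-\psi(x)$ where $\psi:\overline X^h\to\mathbb R$ is a fixed bounded measurable function (known to exist) such that $\int\sigma_0(g,x)d\mu(g)=\ell_\mu$ for all $x$. *)

From HB Require Import structures.
From mathcomp Require Import all_boot all_order all_algebra.
From mathcomp Require Import all_classical all_reals all_analysis.
Set Implicit Arguments. Unset Strict Implicit. Unset Printing Implicit Defensive.
Import Order.TTheory GRing.Theory Num.Theory.
Import numFieldNormedType.Exports.
Local Open Scope classical_set_scope.
Local Open Scope ring_scope.

Definition is_metric (R : realType) (X : Type) (d : X -> X -> R) : Prop :=
  (forall x y, 0 <= d x y) /\ (forall x y, d x y = 0 <-> x = y) /\
  (forall x y, d x y = d y x) /\ (forall x y z, d x z <= d x y + d y z).

Definition separable_metric (R : realType) (X : Type) (d : X -> X -> R) : Prop :=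
  exists D : set X, countable D /\
    forall x (e : R), 0 < e -> exists2 y, D y & d x y < e.

Definition geodesic_metric (R : realType) (X : Type) (d : X -> X -> R) : Prop :=
  forall x y, exists gam : R -> X,
    gam 0 = x /\ gam (d x y) = y /\
    forall s t, 0 <= s <= d x y -> 0 <= t <= d x y -> d (gam s) (gam t) = `|s - t|.

Definition gprod (R : realType) (X : Type) (d : X -> X -> R) (o x y : X) : R :=
  (d x o + d y o - d x y) / 2.

Definition gromov_hyperbolic (R : realType) (X : Type) (d : X -> X -> R) (o : X) : Prop :=
  exists delta : R, 0 <= delta /\
    forall x y z, Num.min (gprod d o x z) (gprod d o z y) - delta <= gprod d o x y.

Record isom (R : realType) (X : Type) (d : X -> X -> R) := Isom {
  ifun : X -> X;
  iinv : X -> X;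
  ifunK : cancel ifun iinv;
  iinvK : cancel iinv ifun;
  ifun_dist : forall x y, d (ifun x) (ifun y) = d x y }.

HB.instance Definition _ (R : realType) (X : Type) (d : X -> X -> R) :=
  gen_eqMixin (isom d).
HB.instance Definition _ (R : realType) (X : Type) (d : X -> X -> R) :=
  gen_choiceMixin (isom d).

Definition kappa (R : realType) (X : Type) (d : X -> X -> R) (o : X) (g : isom d) : R :=
  d (ifun g o) o.

Lemma isom_comp_K (R : realType) (X : Type) (d : X -> X -> R) (g h : isom d) :
  cancel (ifun g \o ifun h) (iinv h \o iinv g).
Proof. by move=> x /=; rewrite ifunK ifunK. Qed.
Lemma isom_comp_VK (R : realType) (X : Type) (d : X -> X -> R) (g h : isom d) :
  cancel (iinv h \o iinv g) (ifun g \o ifun h).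
Proof. by move=> x /=; rewrite iinvK iinvK. Qed.
Lemma isom_comp_dist (R : realType) (X : Type) (d : X -> X -> R) (g h : isom d) x y :
  d ((ifun g \o ifun h) x) ((ifun g \o ifun h) y) = d x y.
Proof. by rewrite /= !ifun_dist. Qed.

(** group product g h (first h, then g) *)
Definition isom_mul (R : realType) (X : Type) (d : X -> X -> R) (g h : isom d) : isom d :=
  Isom (isom_comp_K g h) (isom_comp_VK g h) (isom_comp_dist g h).

Definition isom_id (R : realType) (X : Type) (d : X -> X -> R) : isom d :=
  @Isom R X d id id (fun _ => erefl) (fun _ => erefl) (fun _ _ => erefl).

Definition horo (R : realType) (X : Type) (d : X -> X -> R) (o x : X) : X -> R :=
  fun m => d x m - d x o.

(** closure of {h_x} for the topology of pointwise convergence on X -> R *)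
Definition horo_compact (R : realType) (X : Type) (d : X -> X -> R) (o : X) : set (X -> R) :=
  [set h | forall (F : set X) (e : R), finite_set F -> 0 < e ->
     exists x, forall m, F m -> `|h m - horo d o x m| < e].

Definition horo_act (R : realType) (X : Type) (d : X -> X -> R) (o : X)
  (g : isom d) (h : X -> R) : X -> R :=
  fun m => h (iinv g m) - h (iinv g o).

Definition busemann (R : realType) (X : Type) (d : X -> X -> R) (o : X)
  (g : isom d) (h : X -> R) : R := h (iinv g o).

Definition sigma0 (R : realType) (X : Type) (d : X -> X -> R) (o : X)
  (psi : (X -> R) -> R) (g : isom d) (h : X -> R) : R :=
  busemann o g h + psi (horo_act o g h) - psi h.

Definition supp (R : realType) (X : Type) (d : X -> X -> R) (mu : isom d -> R) : set (isom d) :=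
  [set g | mu g != 0].

Definition countably_supported_proba (R : realType) (X : Type) (d : X -> X -> R)
  (mu : isom d -> R) : Prop :=
  (forall g, 0 <= mu g) /\ countable (supp mu) /\
  (\esum_(g in [set: isom d]) (mu g)%:E = 1)%E.

Definition pexp (R : realType) (X : Type) (d : X -> X -> R) (mu : isom d -> R)
  (f : isom d -> \bar R) : \bar R :=
  \esum_(g in [set: isom d]) ((mu g)%:E * f g)%E.

Definition rexp (R : realType) (X : Type) (d : X -> X -> R) (mu : isom d -> R)
  (f : isom d -> R) : \bar R :=
  (pexp mu (fun g => (Num.max (f g) 0)%:E) - pexp mu (fun g => (Num.max (- f g) 0)%:E))%E.

(** E[f(L_n)] for nonnegative f, L_n = X_n ... X_1 with X_i i.i.d. of law mu *)
Fixpoint rw_exp (R : realType) (X : Type) (d : X -> X -> R) (mu : isom d -> R)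
  (n : nat) (f : isom d -> \bar R) : \bar R :=
  match n with
  | 0 => f (isom_id d)
  | n'.+1 => rw_exp mu n' (fun h => pexp mu (fun g => f (isom_mul g h)))
  end.

Definition finite_exp_moment (R : realType) (X : Type) (d : X -> X -> R) (o : X)
  (mu : isom d -> R) : Prop :=
  exists alpha : R, 0 < alpha /\
    (pexp mu (fun g => (expR (alpha * kappa o g))%:E) < +oo)%E.

Inductive in_semigroup (R : realType) (X : Type) (d : X -> X -> R) (S : set (isom d)) :
  isom d -> Prop :=
| sg_base g : S g -> in_semigroup S g
| sg_mul g h : in_semigroup S g -> in_semigroup S h -> in_semigroup S (isom_mul g h).

Definition loxodromic (R : realType) (X : Type) (d : X -> X -> R) (o : X) (g : isom d) : Prop :=
  exists tau : R, 0 < tau /\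
    (fun n : nat => d (iter n (ifun g) o) o / n%:R) @ \oo --> tau.

(** two sequences converging to infinity define the same Gromov boundary point *)
Definition same_boundary_point (R : realType) (X : Type) (d : X -> X -> R) (o : X)
  (x y : nat -> X) : Prop :=
  forall M : R, exists N : nat, forall n m, (N <= n)%N -> (N <= m)%N ->
    M <= gprod d o (x n) (y m).

(** the two fixed points g^{+} = lim g^n o and g^{-} = lim g^{-n} o on the Gromov boundary *)
Definition fix_seq (R : realType) (X : Type) (d : X -> X -> R) (o : X) (g : isom d)
  (b : bool) : nat -> X :=
  fun n => iter n (if b then ifun g else iinv g) o.

Definition non_elementary (R : realType) (X : Type) (d : X -> X -> R) (o : X)
  (mu : isom d -> R) : Prop :=
  exists g h : isom d,
    in_semigroup (supp mu) g /\ in_semigroup (supp mu) h /\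
    loxodromic o g /\ loxodromic o h /\
    forall b1 b2 : bool,
      ~ same_boundary_point d o (fix_seq o g b1) (fix_seq o h b2).

Definition is_drift (R : realType) (X : Type) (d : X -> X -> R) (o : X)
  (mu : isom d -> R) (l : R) : Prop :=
  (fun n : nat => ((n%:R)^-1)%:E * rw_exp mu n (fun g => (kappa o g)%:E))%E @ \oo
    --> l%:E.

Definition vmu (R : realType) (X : Type) (d : X -> X -> R) (o : X)
  (mu : isom d -> R) (psi : (X -> R) -> R) (l : R) : \bar R :=
  ereal_sup [set pexp mu (fun g => ((sigma0 o psi g xi - l) ^+ 2)%:E)
            | xi in horo_compact d o].

From Pilot Require Import Defs.
From HB Require Import structures.
From mathcomp Require Import all_boot all_order all_algebra.
From mathcomp Require Import all_classical all_reals all_analysis.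
From mathcomp Require Import ring lra.
Import Order.TTheory GRing.Theory Num.Theory.
Import numFieldNormedType.Exports.
Local Open Scope classical_set_scope.
Local Open Scope ring_scope.

(* Since [psi] is bounded by [M], [sigma (L_n, x)] and [sigma0 (L_n, x)] differ by at most
   [2 M], which costs the factor [expR (2 M |lam|)].  By the cocycle identity,
   [sigma0 (L_n, x) - n l] is the sum of the increments [sigma0 (X_(k+1), L_k x) - l]; each is
   centred (this is the defining property of [psi]), has second moment at most [v(mu)], and is
   dominated by [kappa (X_(k+1)) + 2 M + |l|].  The exponential moment therefore bounds the cubic
   Taylor remainder of [expR (lam D)] uniformly in the starting point, so that
   [E expR (lam D) <= expR (lam^2 (v(mu) + eps) / 2)] for [|lam|] small enough, and peeling off one
   step at a time yields the factor [expR (n lam^2 (v(mu) + eps) / 2)]. *)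

Section ExpTaylor.
Context {R : realType}.
Implicit Types y : R.

Lemma mulr_1B_expR_le1 y : (1 - y) * expR y <= 1.
Proof.
have := expR_ge1Dx (- y); have := expRxMexpNx_1 y; have := expR_gt0 y; nra.
Qed.

Lemma expR_le_quadratic_nonpos {y} : y <= 0 -> expR y <= 1 + y + y ^+ 2 / 2.
Proof.
move=> y_le0; pose f := fun t : R => 1 + t + t ^+ 2 / 2 - expR t.
have df (t : R) : is_derive t (1 : R) f (1 + t - expR t).
  apply: is_derive_eq; rewrite !scaler0 !add0r -[t%:A]/(t * 1) mulr1.
  by rewrite -[2^-1 *: _]/(2^-1 * _); field.
have cf : {within `[y, 0], continuous f}.
  apply: continuous_subspaceT => t.
  by apply/differentiable_continuous/derivable1_diffP; exact: ex_derive.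
have [c /andP[+ +] E] := MVT_segment y_le0 (fun t _ => df t) cf.
rewrite !bnd_simp => yc c_le0.
have : (1 + c - expR c) * (0 - y) <= 0.
  by apply: mulr_le0_ge0; have := expR_ge1Dx c; lra.
by move: E; rewrite /f expR0; lra.
Qed.

Lemma expR_le_quadratic_nonneg {y} : 0 <= y -> expR y <= 1 + y + y ^+ 2 / 2 * expR y.
Proof.
move=> y_ge0; pose f := fun t : R => 1 + t + t ^+ 2 / 2 * expR t - expR t.
have df (t : R) : is_derive t (1 : R) f (1 + (t ^+ 2 / 2 * expR t + t * expR t) - expR t).
  apply: is_derive_eq; rewrite !scaler0 !add0r -[t%:A]/(t * 1) mulr1.
  by rewrite /GRing.scale /=; field.
have cf : {within `[0, y], continuous f}.
  apply: continuous_subspaceT => t.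
  by apply/differentiable_continuous/derivable1_diffP; exact: ex_derive.
have [c /andP[+ +] E] := MVT_segment y_ge0 (fun t _ => df t) cf.
rewrite !bnd_simp => c_ge0 cy.
have : 0 <= (1 + (c ^+ 2 / 2 * expR c + c * expR c) - expR c) * (y - 0).
  apply: mulr_ge0; last lra.
  have := mulr_1B_expR_le1 c; have := expR_gt0 c.
  have : 0 <= c ^+ 2 / 2 * expR c by rewrite mulr_ge0 ?divr_ge0 ?sqr_ge0 ?expR_ge0.
  nra.
by move: E; rewrite /f expR0; nra.
Qed.

Lemma expR_le_cubic y : expR y <= 1 + y + y ^+ 2 / 2 + `|y| ^+ 3 * expR `|y| / 2.
Proof.
have [y_ge0|y_lt0] := leP 0 y; last first.
  have : 0 <= `|y| ^+ 3 * expR `|y| / 2.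
    by rewrite divr_ge0 ?mulr_ge0 ?exprn_ge0 ?expR_ge0.
  by have := expR_le_quadratic_nonpos (ltW y_lt0); lra.
rewrite ger0_norm //.
have := expR_le_quadratic_nonneg y_ge0; have := mulr_1B_expR_le1 y.
have := expR_gt0 y; have : 0 <= y ^+ 2 / 2 by rewrite divr_ge0 ?sqr_ge0.
nra.
Qed.

Lemma exprn_le_expR (a x : R) n : 0 < a -> 0 <= x ->
  x ^+ n <= n`!%:R / a ^+ n * expR (a * x).
Proof.
move=> a_gt0 x_ge0; have an_gt0 : 0 < a ^+ n by rewrite exprn_gt0.
rewrite mulrAC ler_pdivlMr // -exprMn mulrC -ler_pdivrMl ?ltr0n ?fact_gt0 //.
case: n an_gt0 => [|n] _; first by rewrite expr0 fact0 invr1 mul1r -expR0 ler_expR mulr_ge0 // ltW.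
apply: le_trans (expR_ge1Dxn n (mulr_ge0 (ltW a_gt0) x_ge0)).
lra.
Qed.

End ExpTaylor.

Section EsumScale.
Context {R : realType} {T : choiceType}.
Local Open Scope ereal_scope.

Lemma esumZl (S : set T) (c : R) (a : T -> \bar R) : (0 <= c)%R ->
  (forall i, 0 <= a i) ->
  \esum_(i in S) (c%:E * a i) = c%:E * \esum_(i in S) a i.
Proof.
move=> c_ge0 a_ge0; rewrite /esum -ereal_supZl //; last first.
  by apply/set0P; exists 0; exists set0; [exact: fsets_set0|exact: fsbig_set0].
rewrite image_comp; congr ereal_sup; apply: eq_imagel => A _ /=.
by rewrite ge0_mule_fsumr.
Qed.

End EsumScale.

Section Busemann.
Context {R : realType} {X : Type} {d : X -> X -> R}.
Hypothesis d_metric : is_metric d.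
Context {o : X}.
Implicit Types (g : isom d) (xi : X -> R).

Lemma metric_ge0 x y : 0 <= d x y.
Proof. by case: d_metric. Qed.

Lemma metric_sym x y : d x y = d y x.
Proof. by case: d_metric => _ [_ []]. Qed.

Lemma metric_triangle x y z : d x z <= d x y + d y z.
Proof. by case: d_metric => _ [_ [_]]. Qed.

Lemma metric_refl x : d x x = 0.
Proof. by case: d_metric => _ [dP _]; apply/dP. Qed.

Lemma norm_horo_le x m : `|horo d o x m| <= d m o.
Proof.
rewrite /horo ler_norml; have := metric_triangle x m o; have := metric_triangle x o m.
by rewrite (metric_sym m o) (metric_sym o m) => *; apply/andP; split; lra.
Qed.

Lemma horo_compact_horo x : horo_compact d o (horo d o x).
Proof. by move=> F e _ e_gt0; exists x => m _; rewrite subrr normr0. Qed.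

Lemma horo_compact_norm_le {xi} m : horo_compact d o xi -> `|xi m| <= d m o.
Proof.
move=> Sxi; apply/ler_addgt0Pr => e e_gt0.
have [x /(_ m erefl) xi_near] := Sxi [set m] e (finite_set1 m) e_gt0.
have := ler_normD (xi m - horo d o x m) (horo d o x m).
by rewrite subrK; have := norm_horo_le x m; lra.
Qed.

Lemma horo_compact_o {xi} : horo_compact d o xi -> xi o = 0.
Proof.
by move=> /(horo_compact_norm_le o); rewrite metric_refl normr_le0 => /eqP.
Qed.

Lemma horo_compact_act g {xi} : horo_compact d o xi -> horo_compact d o (horo_act o g xi).
Proof.
move=> Sxi F e finF e_gt0.
have finF' : finite_set ((Defs.iinv g @` F) `|` [set Defs.iinv g o]).
  by rewrite finite_setU; split; [exact: finite_image | exact: finite_set1].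
have [x xi_near] := Sxi _ (e / 2) finF' (divr_gt0 e_gt0 (ltr0n _ 2)).
exists (ifun g x) => m Fm.
have dg y : d (ifun g x) y = d x (Defs.iinv g y) by rewrite -{1}(iinvK g y) ifun_dist.
have := xi_near (Defs.iinv g m) (or_introl (ex_intro2 _ _ m Fm erefl)).
have := xi_near (Defs.iinv g o) (or_intror erefl).
rewrite /horo_act /horo !dg; set m' := Defs.iinv g m; set o' := Defs.iinv g o.
have -> : xi m' - xi o' - (d x m' - d x o') =
          (xi m' - (d x m' - d x o)) - (xi o' - (d x o' - d x o)) by ring.
by have := ler_normB (xi m' - (d x m' - d x o)) (xi o' - (d x o' - d x o)); lra.
Qed.

Lemma kappa_ge0 g : 0 <= kappa o g.
Proof. exact: metric_ge0. Qed.

Lemma norm_busemann_le_kappa g {xi} : horo_compact d o xi -> `|busemann o g xi| <= kappa o g.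
Proof.
move=> /(horo_compact_norm_le (Defs.iinv g o)) /le_trans; apply.
by rewrite /kappa -(ifun_dist g) iinvK metric_sym.
Qed.

Lemma horo_act_mul g (h : isom d) xi :
  horo_act o (isom_mul g h) xi = horo_act o g (horo_act o h xi).
Proof. by apply/funext => m; rewrite /horo_act /=; ring. Qed.

Lemma horo_act_id {xi} : horo_compact d o xi -> horo_act o (isom_id d) xi = xi.
Proof. by move=> Sxi; apply/funext => m; rewrite /horo_act /= horo_compact_o ?subr0. Qed.

Lemma sigma0_cocycle psi g (h : isom d) xi :
  sigma0 o psi (isom_mul g h) xi = sigma0 o psi h xi + sigma0 o psi g (horo_act o h xi).
Proof. by rewrite /sigma0 /busemann horo_act_mul /horo_act /=; ring. Qed.

Lemma sigma0_id psi {xi} : horo_compact d o xi -> sigma0 o psi (isom_id d) xi = 0.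
Proof.
by move=> Sxi; rewrite /sigma0 horo_act_id // /busemann /= horo_compact_o // add0r subrr.
Qed.

Section Expectation.
Context {mu : isom d -> R}.
Hypothesis mu_ge0 : forall g, 0 <= mu g.
Hypothesis mu_sum1 : (\esum_(g in [set: isom d]) (mu g)%:E = 1)%E.
Implicit Types (f A B : isom d -> R).

Local Open Scope ereal_scope.

Lemma pexp_ge0 (f : isom d -> \bar R) : (forall g, 0 <= f g) -> 0 <= pexp mu f.
Proof. by move=> f_ge0; apply: esum_ge0 => g _; rewrite mule_ge0 ?lee_fin. Qed.

Lemma le_pexp (f f' : isom d -> \bar R) : (forall g, f g <= f' g) -> pexp mu f <= pexp mu f'.
Proof. by move=> ff'; apply: le_esum => g _; rewrite lee_wpmul2l ?lee_fin. Qed.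

Lemma pexpD (f h : isom d -> R) : (forall g, 0 <= f g)%R -> (forall g, 0 <= h g)%R ->
  pexp mu (fun g => (f g + h g)%:E) = pexp mu (fun g => (f g)%:E) + pexp mu (fun g => (h g)%:E).
Proof.
move=> f_ge0 h_ge0; rewrite /pexp -esumD => [|g _|g _]; rewrite ?mule_ge0 ?lee_fin //.
by apply: eq_esum => g _; rewrite EFinD ge0_muleDr ?lee_fin.
Qed.

Lemma pexpZl (c : R) (f : isom d -> \bar R) : (0 <= c)%R -> (forall g, 0 <= f g) ->
  pexp mu (fun g => c%:E * f g) = c%:E * pexp mu f.
Proof.
move=> c_ge0 f_ge0; rewrite /pexp -esumZl // => [|g]; last by rewrite mule_ge0 ?lee_fin.
by apply: eq_esum => g _; rewrite muleCA.
Qed.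

Lemma pexp_cst (c : R) : (0 <= c)%R -> pexp mu (fun=> c%:E) = c%:E.
Proof.
move=> c_ge0; rewrite /pexp; under eq_esum do rewrite muleC.
by rewrite esumZl // mu_sum1 mule1.
Qed.

Lemma le_rw_exp n (f f' : isom d -> \bar R) : (forall g, f g <= f' g) ->
  rw_exp mu n f <= rw_exp mu n f'.
Proof.
elim: n f f' => [|n IHn] f f' ff' /=; first exact: ff'.
by apply: IHn => h; apply: le_pexp => g; exact: ff'.
Qed.

Lemma rw_expZl n (c : R) (f : isom d -> \bar R) : (0 <= c)%R -> (forall g, 0 <= f g) ->
  rw_exp mu n (fun g => c%:E * f g) = c%:E * rw_exp mu n f.
Proof.
move=> c_ge0; elim: n f => [|n IHn] f f_ge0 //=.
rewrite -IHn => [|h]; last exact: pexp_ge0.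
by congr rw_exp; apply/funext => h; rewrite pexpZl.
Qed.

Local Close Scope ereal_scope.

Definition mu_integrable f := (pexp mu (fun g => `|f g|%:E) < +oo)%E.

Definition expect f : R :=
  fine (pexp mu (fun g => (f^\+ g)%:E)) - fine (pexp mu (fun g => (f^\- g)%:E)).

Lemma mu_integrable_le {f h} : (forall g, `|f g| <= `|h g|) ->
  mu_integrable h -> mu_integrable f.
Proof. by move=> fh; apply: le_lt_trans; apply: le_pexp => g; rewrite lee_fin. Qed.

Lemma mu_integrableD {f h} : mu_integrable f -> mu_integrable h ->
  mu_integrable (fun g => f g + h g).
Proof.
move=> If Ih; apply: le_lt_trans (lte_add_pinfty If Ih).
by rewrite -pexpD //; apply: le_pexp => g; rewrite lee_fin ler_normD.
Qed.

Lemma mu_integrableZ c {f} : mu_integrable f -> mu_integrable (fun g => c * f g).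
Proof.
move=> If; rewrite /mu_integrable.
under eq_fun do rewrite normrM EFinM.
by rewrite pexpZl // ?lte_mul_pinfty // => g; rewrite lee_fin.
Qed.

Lemma mu_integrable_cst c : mu_integrable (fun=> c).
Proof. by rewrite /mu_integrable pexp_cst // ltry. Qed.

Lemma mu_integrable_pos {f} : mu_integrable f -> mu_integrable f^\+.
Proof.
by apply: mu_integrable_le => g; rewrite ger0_norm // ge_max ler_norm normr_ge0.
Qed.

Lemma mu_integrable_neg {f} : mu_integrable f -> mu_integrable f^\-.
Proof.
apply: mu_integrable_le => g.
by rewrite ger0_norm // ge_max normr_ge0 andbT -normrN ler_norm.
Qed.

Lemma pexp_fin_num {f} : (forall g, 0 <= f g) -> mu_integrable f ->
  pexp mu (fun g => (f g)%:E) \is a fin_num.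
Proof.
move=> f_ge0 If; rewrite ge0_fin_numE ?pexp_ge0 //.
by apply: le_lt_trans If; apply: le_pexp => g; rewrite lee_fin ler_norm.
Qed.

Lemma expect_split f A B : (forall g, 0 <= A g) -> (forall g, 0 <= B g) ->
  mu_integrable A -> mu_integrable B -> (forall g, f g = A g - B g) ->
  expect f = fine (pexp mu (fun g => (A g)%:E)) - fine (pexp mu (fun g => (B g)%:E)).
Proof.
move=> A_ge0 B_ge0 IA IB fE.
have If : mu_integrable f.
  apply: (mu_integrable_le _ (mu_integrableD IA IB)) => g.
  by rewrite fE [X in _ <= X]ger0_norm ?addr_ge0 // (le_trans (ler_normB _ _)) ?ger0_norm.
have posneg g : f^\+ g + B g = f^\- g + A g.
  by have := congr1 (@^~ g) (funrposBneg f); rewrite fE !fctE; lra.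
have := congr1 (fun F => fine (pexp mu F)) (funext (fun g => congr1 EFin (posneg g))).
rewrite /= !pexpD //.
have finP := pexp_fin_num (funrpos_ge0 f) (mu_integrable_pos If).
have finN := pexp_fin_num (funrneg_ge0 f) (mu_integrable_neg If).
by rewrite !fineD ?finP ?finN ?pexp_fin_num // /expect; lra.
Qed.

Lemma rexpE {f} : mu_integrable f -> rexp mu f = (expect f)%:E.
Proof.
move=> If; have finP := pexp_fin_num (funrpos_ge0 f) (mu_integrable_pos If).
have finN := pexp_fin_num (funrneg_ge0 f) (mu_integrable_neg If).
by rewrite /expect EFinB !fineK.
Qed.

Lemma pexp_expect {f} : (forall g, 0 <= f g) -> mu_integrable f ->
  pexp mu (fun g => (f g)%:E) = (expect f)%:E.
Proof.
move=> f_ge0 If; rewrite (expect_split f f (fun=> 0)) ?pexp_cst ?mu_integrable_cst //.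
  by rewrite subr0 fineK // pexp_fin_num.
by move=> g; rewrite subr0.
Qed.

Lemma expect_cst c : expect (fun=> c) = c.
Proof.
have posneg : Num.max c 0 - Num.max (- c) 0 = c by have := congr1 (@^~ c) (funrposBneg id).
by rewrite (expect_split _ (fun=> Num.max c 0) (fun=> Num.max (- c) 0))
  ?pexp_cst ?mu_integrable_cst ?le_max ?lexx ?orbT.
Qed.

Lemma expectD {f h} : mu_integrable f -> mu_integrable h ->
  expect (fun g => f g + h g) = expect f + expect h.
Proof.
move=> If Ih; have Ipf := mu_integrable_pos If; have Inf := mu_integrable_neg If.
have Iph := mu_integrable_pos Ih; have Inh := mu_integrable_neg Ih.
have dec g : f g + h g = (f^\+ g + h^\+ g) - (f^\- g + h^\- g).
  by rewrite -[in LHS](funrposBneg f) -[in LHS](funrposBneg h) !fctE; lra.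
rewrite (expect_split _ _ _ (fun g => addr_ge0 (funrpos_ge0 f g) (funrpos_ge0 h g))
  (fun g => addr_ge0 (funrneg_ge0 f g) (funrneg_ge0 h g))
  (mu_integrableD Ipf Iph) (mu_integrableD Inf Inh) dec).
by rewrite !pexpD // !fineD ?pexp_fin_num // /expect; lra.
Qed.

Lemma expectN f : expect (fun g => - f g) = - expect f.
Proof.
rewrite /expect opprB; congr (_ - fine (pexp mu _)).
by apply/funext => g; rewrite /funrneg /funrpos opprK.
Qed.

Lemma expectZ c {f} : mu_integrable f -> expect (fun g => c * f g) = c * expect f.
Proof.
wlog c_ge0 : c / 0 <= c => [wlog_c|If].
  have [|c_lt0 If] := leP 0 c; first exact: wlog_c.
  have -> : (fun g => c * f g) = (fun g => - (- c * f g)) by apply/funext => g; rewrite mulNr opprK.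
  by rewrite expectN wlog_c ?oppr_ge0 ?ltW // mulNr opprK.
have dec g : c * f g = c * f^\+ g - c * f^\- g.
  by rewrite -mulrBr -[in LHS](funrposBneg f).
rewrite (expect_split _ _ _ (fun g => mulr_ge0 c_ge0 (funrpos_ge0 f g))
  (fun g => mulr_ge0 c_ge0 (funrneg_ge0 f g))
  (mu_integrableZ c (mu_integrable_pos If)) (mu_integrableZ c (mu_integrable_neg If)) dec).
have finP := pexp_fin_num (funrpos_ge0 f) (mu_integrable_pos If).
have finN := pexp_fin_num (funrneg_ge0 f) (mu_integrable_neg If).
rewrite (pexpZl c (fun g => (f^\+ g)%:E)) => [|//|g]; last by rewrite lee_fin.
rewrite (pexpZl c (fun g => (f^\- g)%:E)) => [|//|g]; last by rewrite lee_fin.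
by rewrite !fineM // /expect mulrBr.
Qed.

Lemma expect_ge0 f : (forall g, 0 <= f g) -> mu_integrable f -> 0 <= expect f.
Proof. by move=> f_ge0 If; rewrite -lee_fin -pexp_expect // pexp_ge0. Qed.

Lemma le_expect {f h} : mu_integrable f -> mu_integrable h -> (forall g, f g <= h g) ->
  expect f <= expect h.
Proof.
move=> If Ih fh.
have INf : mu_integrable (fun g => - f g).
  by apply: (mu_integrable_le _ If) => g; rewrite normrN.
rewrite -subr_ge0 -expectN -expectD //.
by apply: expect_ge0 => [g|]; [rewrite subr_ge0 fh | exact: mu_integrableD].
Qed.

Section DominatedIncrements.
Context {k : isom d -> R} {K alpha : R}.
Hypotheses (k_ge0 : forall g, 0 <= k g) (K_ge0 : 0 <= K) (alpha_gt0 : 0 < alpha).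
Hypothesis k_exp_moment : (pexp mu (fun g => (expR (alpha * k g))%:E) < +oo)%E.
Implicit Types (D : isom d -> R).

Let kK_ge0 g : 0 <= k g + K. Proof. by rewrite addr_ge0. Qed.

Lemma mu_integrable_le_expR f b :
  (forall g, `|f g| <= b * expR (alpha * (k g + K))) -> mu_integrable f.
Proof.
move=> f_le; have Iexp : mu_integrable (fun g => expR (alpha * k g)).
  rewrite /mu_integrable (_ : (fun g => _) = fun g => (expR (alpha * k g))%:E) //.
  by apply/funext => g; rewrite ger0_norm ?expR_ge0.
apply: (mu_integrable_le _ (mu_integrableZ (b * expR (alpha * K)) Iexp)) => g.
apply: le_trans (f_le g) (le_trans _ (ler_norm _)).
by rewrite -mulrA -expRD [alpha * K + _]addrC mulrDr.
Qed.

Lemma mu_integrable_powD n : mu_integrable (fun g => (k g + K) ^+ n).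
Proof.
apply: (mu_integrable_le_expR _ (n`!%:R / alpha ^+ n)) => g.
by rewrite ger0_norm ?exprn_ge0 // exprn_le_expR.
Qed.

Let cubic_weight g := (k g + K) ^+ 3 * expR (alpha / 2 * (k g + K)).

Lemma mu_integrable_cubic_weight : mu_integrable cubic_weight.
Proof.
apply: (mu_integrable_le_expR _ (3`!%:R / (alpha / 2) ^+ 3)) => g.
have a2_gt0 : 0 < alpha / 2 by rewrite divr_gt0.
rewrite ger0_norm ?mulr_ge0 ?exprn_ge0 ?expR_ge0 //.
have -> : alpha * (k g + K) = alpha / 2 * (k g + K) + alpha / 2 * (k g + K) by field.
by rewrite expRD mulrA ler_wpM2r ?expR_ge0 ?exprn_le_expR.
Qed.

Lemma expR_le_cubic_weight D lam g : (forall g, `|D g| <= k g + K) -> `|lam| <= alpha / 2 ->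
  expR (lam * D g) <=
  1 + lam * D g + lam ^+ 2 / 2 * D g ^+ 2 + `|lam| ^+ 3 / 2 * cubic_weight g.
Proof.
move=> D_le lam_le; apply: le_trans (expR_le_cubic (lam * D g)) _.
have lamD_le : `|lam| * `|D g| <= alpha / 2 * (k g + K) by rewrite ler_pM.
have cube_le : `|D g| ^+ 3 <= (k g + K) ^+ 3 by rewrite lerXn2r ?nnegrE.
have : `|lam * D g| ^+ 3 * expR `|lam * D g| <= `|lam| ^+ 3 * cubic_weight g.
  rewrite normrM exprMn -mulrA ler_wpM2l ?exprn_ge0 //.
  by rewrite ler_pM ?exprn_ge0 ?expR_ge0 // ler_expR.
rewrite exprMn; lra.
Qed.

Lemma mu_integrable_dominated {D} n : (forall g, `|D g| <= k g + K) ->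
  mu_integrable (fun g => D g ^+ n).
Proof.
move=> D_le; apply: (mu_integrable_le _ (mu_integrable_powD n)) => g.
by rewrite normrX [X in _ <= X]ger0_norm ?exprn_ge0 // lerXn2r ?nnegrE.
Qed.

Lemma expect_sqr_dominated D : (forall g, `|D g| <= k g + K) ->
  expect (fun g => D g ^+ 2) <= expect (fun g => (k g + K) ^+ 2).
Proof.
move=> D_le; apply: le_expect; [exact: mu_integrable_dominated | exact: mu_integrable_powD |].
by move=> g; rewrite -(real_normK (num_real (D g))) lerXn2r ?nnegrE.
Qed.

(* [lam0] does not depend on [D]: the cubic Taylor remainder is bounded by the fixed
   integrable [cubic_weight]. *)
Lemma centred_mgf_le eps : 0 < eps -> exists2 lam0, 0 < lam0 &
  forall D v lam, (forall g, `|D g| <= k g + K) -> expect D = 0 ->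
    expect (fun g => D g ^+ 2) <= v -> `|lam| <= lam0 ->
    (pexp mu (fun g => (expR (lam * D g))%:E) <= (expR (lam ^+ 2 * (v + eps) / 2))%:E)%E.
Proof.
move=> eps_gt0; set w := expect cubic_weight.
have w_ge0 : 0 <= w by apply: expect_ge0 (mu_integrable_cubic_weight) => g;
  rewrite mulr_ge0 ?exprn_ge0 ?expR_ge0.
exists (Num.min (alpha / 2) (eps / (w + 1))).
  by rewrite lt_min !divr_gt0 // ltr_wpDl.
move=> D v lam D_le D_centred D2_le; rewrite le_min => /andP[lam_le lam_le_eps].
have ID := mu_integrable_dominated 1 D_le; have ID2 := mu_integrable_dominated 2 D_le.
have Iexp : mu_integrable (fun g => expR (lam * D g)).
  apply: (mu_integrable_le_expR _ 1) => g; rewrite mul1r ger0_norm ?expR_ge0 // ler_expR.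
  apply: le_trans (ler_norm _) _; rewrite normrM (le_trans (ler_pM _ _ lam_le (D_le g))) //.
  by rewrite ler_wpM2r // ler_pdivrMr // ler_pMr // ler1n.
rewrite pexp_expect ?expR_ge0 // lee_fin.
apply: le_trans (le_expect Iexp _ (fun g => expR_le_cubic_weight _ _ g D_le lam_le)) _.
  by rewrite ?(mu_integrableD, mu_integrableZ, mu_integrable_cst, mu_integrable_cubic_weight).
have Iw := mu_integrable_cubic_weight.
rewrite !expectD ?expectZ ?expect_cst ?D_centred;
  rewrite ?(mu_integrableD, mu_integrableZ, mu_integrable_cst) //.
have cube : `|lam| ^+ 3 = lam ^+ 2 * `|lam| by rewrite exprSr real_normK ?num_real.
rewrite -/w mulr0 addr0 cube.
have lam_w : `|lam| * w <= eps.
  by move: lam_le_eps; rewrite ler_pdivlMr ?ltr_wpDl // mulrDr mulr1; have := normr_ge0 lam; lra.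
have := expR_ge1Dx (lam ^+ 2 * (v + eps) / 2).
have := ler_wpM2l (sqr_ge0 lam) D2_le; have := ler_wpM2l (sqr_ge0 lam) lam_w.
lra.
Qed.

End DominatedIncrements.

Section RandomWalk.
Context {psi : (X -> R) -> R} {l : R}.

Local Open Scope ereal_scope.

(* Peel off the last step: [sigma0 (X_(n+1) L_n) x = sigma0 L_n x + sigma0 X_(n+1) (L_n x)],
   and the mgf of the second increment is at most [expR q] whatever [L_n x] is. *)
Lemma rw_exp_sigma0_le {lam q : R} {n x} : horo_compact d o x ->
  (forall xi, horo_compact d o xi ->
    pexp mu (fun g => (expR (lam * (sigma0 o psi g xi - l)))%:E) <= (expR q)%:E) ->
  rw_exp mu n (fun g => (expR (lam * (sigma0 o psi g x - n%:R * l)))%:E)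
    <= (expR (n%:R * q))%:E.
Proof.
move=> Sx mgf_le; elim: n => [|n IHn] /=.
  by rewrite sigma0_id // !mul0r subrr mulr0.
apply: le_trans (le_rw_exp n _ (fun h => (expR q)%:E *
  (expR (lam * (sigma0 o psi h x - n%:R * l)))%:E) _) _ => [h|].
  have -> : (fun g => (expR (lam * (sigma0 o psi (isom_mul g h) x - n.+1%:R * l)))%:E) =
      (fun g => (expR (lam * (sigma0 o psi h x - n%:R * l)))%:E *
                (expR (lam * (sigma0 o psi g (horo_act o h x) - l)))%:E).
    apply/funext => g; rewrite -EFinM -expRD sigma0_cocycle -natr1; congr (expR _)%:E.
    ring.
  rewrite pexpZl ?expR_ge0 //.
  rewrite muleC; apply: lee_wpmul2r; [by rewrite lee_fin expR_ge0 | exact/mgf_le/horo_compact_act].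
rewrite rw_expZl ?expR_ge0 //.
apply: le_trans (lee_wpmul2l _ IHn) _; first by rewrite lee_fin expR_ge0.
by rewrite -EFinM -expRD lee_fin -natr1 mulrDl mul1r addrC.
Qed.

Local Close Scope ereal_scope.

Context {alpha M : R}.
Hypothesis alpha_gt0 : 0 < alpha.
Hypothesis kappa_exp_moment : (pexp mu (fun g => (expR (alpha * kappa o g))%:E) < +oo)%E.
Hypothesis psi_le : forall xi, horo_compact d o xi -> `|psi xi| <= M.
Hypothesis sigma0_mean :
  forall xi, horo_compact d o xi -> rexp mu (fun g => sigma0 o psi g xi) = l%:E.

Let M_ge0 : 0 <= M.
Proof. exact: le_trans (normr_ge0 _) (psi_le _ (horo_compact_horo o)). Qed.

Let K := 2 * M + `|l|.
Let K_ge0 : 0 <= K. Proof. by rewrite addr_ge0 ?mulr_ge0 ?M_ge0. Qed.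

Lemma sigma0_dominated {xi} g : horo_compact d o xi ->
  `|sigma0 o psi g xi - l| <= kappa o g + K.
Proof.
move=> Sxi; rewrite /sigma0 /K.
have := norm_busemann_le_kappa g Sxi; have := psi_le _ (horo_compact_act g Sxi).
have := psi_le _ Sxi; rewrite !ler_norml => /andP[? ?] /andP[? ?] /andP[? ?].
by have := ler_norm l; have := ler_norm (- l); rewrite normrN; lra.
Qed.

Lemma sigma0_centred xi : horo_compact d o xi -> expect (fun g => sigma0 o psi g xi - l) = 0.
Proof.
move=> Sxi; have ID : mu_integrable (fun g => sigma0 o psi g xi - l) :=
  mu_integrable_dominated kappa_ge0 K_ge0 alpha_gt0 kappa_exp_moment 1 (sigma0_dominated^~ Sxi).
have Isigma : mu_integrable (fun g => sigma0 o psi g xi).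
  by apply: (mu_integrable_le _ (mu_integrableD ID (mu_integrable_cst l))) => g; rewrite subrK.
rewrite expectD ?mu_integrable_cst // expect_cst.
by have := sigma0_mean _ Sxi; rewrite rexpE // => -[->]; rewrite subrr.
Qed.

Lemma pexp_sigma0_sqrE xi : horo_compact d o xi ->
  pexp mu (fun g => ((sigma0 o psi g xi - l) ^+ 2)%:E) =
  (expect (fun g => (sigma0 o psi g xi - l) ^+ 2))%:E.
Proof.
move=> Sxi; apply: pexp_expect (fun g => sqr_ge0 _) _.
by have := mu_integrable_dominated kappa_ge0 K_ge0 alpha_gt0 kappa_exp_moment 2
  (sigma0_dominated^~ Sxi).
Qed.

Lemma vmu_ge0 : (0 <= vmu o mu psi l)%E.
Proof.
apply: le_trans (ereal_sup_ubound _) => /=; last by exists (horo d o o); first exact: horo_compact_horo.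
by apply: pexp_ge0 => g; rewrite lee_fin sqr_ge0.
Qed.

Lemma vmu_fin_num : vmu o mu psi l \is a fin_num.
Proof.
rewrite ge0_fin_numE ?vmu_ge0 //; apply: le_lt_trans (ltry (expect (fun g => (kappa o g + K) ^+ 2))).
apply: ub_ereal_sup => _ [xi Sxi <-]; rewrite pexp_sigma0_sqrE // lee_fin.
apply: (expect_sqr_dominated kappa_ge0 K_ge0 alpha_gt0 kappa_exp_moment) => g.
exact: sigma0_dominated.
Qed.

Lemma expect_sigma0_sqr_le_vmu xi : horo_compact d o xi ->
  expect (fun g => (sigma0 o psi g xi - l) ^+ 2) <= fine (vmu o mu psi l).
Proof.
move=> Sxi; rewrite -lee_fin fineK ?vmu_fin_num // -pexp_sigma0_sqrE //.
by apply: ereal_sup_ubound; exists xi.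
Qed.

Lemma busemann_le_sigma0 lam n g x : horo_compact d o x ->
  lam * (busemann o g x - n%:R * l) <= lam * (sigma0 o psi g x - n%:R * l) + 2 * M * `|lam|.
Proof.
move=> Sx; have := psi_le _ (horo_compact_act g Sx); have := psi_le _ Sx.
rewrite /sigma0 !ler_norml => /andP[? ?] /andP[? ?].
have : `|psi (horo_act o g x) - psi x| <= 2 * M by rewrite ler_norml; apply/andP; split; lra.
move=> /(ler_wpM2l (normr_ge0 lam)); rewrite -normrM.
have := ler_norm (- (lam * (psi (horo_act o g x) - psi x))); rewrite normrN; lra.
Qed.

Lemma busemann_mgf_le eps : 0 < eps -> exists2 lam0, 0 < lam0 &
  forall lam n x, `|lam| <= lam0 -> horo_compact d o x ->
  (rw_exp mu n (fun g => (expR (lam * (busemann o g x - n%:R * l)))%:E)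
    <= (expR (lam ^+ 2 * (fine (vmu o mu psi l) + eps) * n%:R / 2 + 2 * M * `|lam|))%:E)%E.
Proof.
move=> eps_gt0.
have [lam0 lam0_gt0 mgf_le] :=
  centred_mgf_le kappa_ge0 K_ge0 alpha_gt0 kappa_exp_moment eps eps_gt0.
exists lam0 => // lam n x lam_le Sx.
have step xi : horo_compact d o xi ->
    (pexp mu (fun g => (expR (lam * (sigma0 o psi g xi - l)))%:E)
      <= (expR (lam ^+ 2 * (fine (vmu o mu psi l) + eps) / 2))%:E)%E.
  move=> Sxi; apply: (mgf_le _ _ _ (sigma0_dominated^~ Sxi)) lam_le.
    exact: sigma0_centred.
  exact: expect_sigma0_sqr_le_vmu.
apply: le_trans (le_rw_exp n _ (fun g => (expR (2 * M * `|lam|))%:E *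
  (expR (lam * (sigma0 o psi g x - n%:R * l)))%:E)%E _) _ => [g|].
  by rewrite -EFinM -expRD lee_fin ler_expR [leRHS]addrC busemann_le_sigma0.
rewrite rw_expZl ?expR_ge0 //.
apply: le_trans (lee_wpmul2l _ (rw_exp_sigma0_le Sx step)) _; first by rewrite lee_fin expR_ge0.
by rewrite -EFinM -expRD lee_fin ler_expR; lra.
Qed.

End RandomWalk.

End Expectation.

End Busemann.

Theorem proposition4p4 (R : realType) (X : Type) (d : X -> X -> R) (o : X)
  (mu : isom d -> R) (l : R) (psi : (X -> R) -> R) :
  is_metric d -> separable_metric d -> geodesic_metric d -> gromov_hyperbolic d o ->
  countably_supported_proba mu -> non_elementary o mu -> finite_exp_moment o mu ->
  is_drift o mu l ->
  (exists M : R, forall h, horo_compact d o h -> `|psi h| <= M) ->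
  (forall x, horo_compact d o x -> rexp mu (fun g => sigma0 o psi g x) = l%:E) ->
  exists C : R, 0 < C /\
    forall eps : R, 0 < eps ->
      exists b : R, 0 < b /\
        forall (lam : R) (n : nat) (x : X -> R),
          (`|lam|%:E < vmu o mu psi l * (b^-1)%:E)%E ->
          horo_compact d o x ->
          (rw_exp mu n (fun g => (expR (lam * (busemann o g x - n%:R * l)))%:E)
            <= (expR (lam ^+ 2 * (fine (vmu o mu psi l) + eps) * n%:R / 2
                      + C * `|lam|))%:E)%E.
Proof.
move=> d_metric _ _ _ [mu_ge0 [_ mu_sum1]] _ [alpha [alpha_gt0 exp_moment]] _ [M psi_le] mean.
have vmu_fin := vmu_fin_num (l := l) d_metric mu_ge0 mu_sum1 alpha_gt0 exp_moment psi_le.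
set v := fine (vmu o mu psi l); have v_ge0 : 0 <= v := fine_ge0 (vmu_ge0 (l := l) mu_ge0).
exists (`|2 * M| + 1); split => [|eps eps_gt0]; first by rewrite ltr_wpDl.
have [lam0 lam0_gt0 mgf_le] :=
  busemann_mgf_le d_metric mu_ge0 mu_sum1 alpha_gt0 exp_moment psi_le mean eps eps_gt0.
exists ((v + 1) / lam0); split => [|lam n x]; first by rewrite divr_gt0 // ltr_wpDl.
rewrite -(fineK vmu_fin) -EFinM lte_fin -/v => lam_lt Sx.
apply: le_trans (mgf_le lam n x _ Sx) _.
  have : v * ((v + 1) / lam0)^-1 <= lam0.
    by rewrite invf_div mulrA ler_pdivrMr ?ltr_wpDl //; lra.
  lra.
rewrite lee_fin ler_expR lerD2l ler_wpM2r //.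
by rewrite ler_wpDr // ler_norm.
Qed.
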